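(* (i) $\mathcal T$ is generated as an algebra by $A$ together with all $E^*_{[s,t]}$. (ii) $\mathcal T$ equals the (associative, unital) subalgebra of $\mathrm{Mat}_X(\mathbb C)$ generated by $L_1,L_2,R_1,R_2$. (iii) Let $\mathcal L$ be the Lie subalgebra generated by $L_1,L_2,R_1,R_2$; then $\mathcal L\simeq\mathfrak{sl}_3(\mathbb C)$, a subspace $W\subseteq V$ is an $\mathcal L$-submodule if and only if it is a $\mathcal T$-submodule, and such $W$ is irreducible as an $\mathcal L$-module if and only if it is irreducible as a $\mathcal T$-module.
   Context: Let $d\ge1$, $\mathbb F_3=\{0,1,2\}$ (integers mod 3) and $X=\mathbb F_3^d$. The Hamming digraph $H^*(d,3)$ has vertex set $X$, with an arc from $y$ to $z$ iff $y$ and $z$ differ in exactly one coordinate $i$ and $z_i=y_i+1$ in $\mathbb F_3$. Let $V=\mathbb C^X$ with standard basis $\{\hat y:y\in X\}$, and $\mathrm{Mat}_X(\mathbb C)$ the algebra of complex matrices indexed by $X$, acting on $V$. The adjacency matrix $A$ has $(y,z)$-entry $1$ if there is an arc from $y$ to $z$ and $0$ otherwise. The type of $y\in X$ is $(r,s,t)$ where $r,s,t$ are the numbers of coordinates of $y$ equal to $0,1,2$ ($r+s+t=d$). For integers $s,t$, $E^*_{[s,t]}$ is the diagonal matrix whose $(y,y)$-entry is $1$ if $y$ has exactly $s$ ones and $t$ twos, and $0$ otherwise. The Terwilliger algebra $\mathcal T$ is the subalgebra of $\mathrm{Mat}_X(\mathbb C)$ generated by $A$, $A^\top$ and all $E^*_{[s,t]}$.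 Define linear operators on $V$: $R_1\hat y$ is the sum of $\hat z$ over all $z$ obtained from $y$ by changing exactly one coordinate equal to $0$ into $1$ (empty sum $=0$); similarly $R_2$ changes one coordinate $1\mapsto2$, $L_1$ changes $1\mapsto0$, $L_2$ changes $2\mapsto 1$. (One has $A^\top=R_1+R_2+L_3$ and $A=L_1+L_2+R_3$, where $L_3$ changes one coordinate $2\mapsto0$ and $R_3$ one coordinate $0\mapsto 2$.) *)

From HB Require Import structures.
From mathcomp Require Import all_boot all_order all_algebra.
From mathcomp.real_closed Require Import complex.
From mathcomp Require Import Rstruct.
Set Implicit Arguments. Unset Strict Implicit. Unset Printing Implicit Defensive.
Import Order.TTheory GRing.Theory Num.Theory.
Local Open Scope ring_scope.

Definition C : fieldType := complex Rdefinitions.R.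

(* X = F_3^d, coordinates in 'I_3 = {0,1,2} *)
Definition X (d : nat) : finType := {ffun 'I_d -> 'I_3}.

Definition nX (d : nat) : nat := #|X d|.
Definition MatX (d : nat) := 'M[C]_(nX d).
Definition VX (d : nat) := 'cV[C]_(nX d).

Definition mxX (d : nat) (f : X d -> X d -> C) : MatX d :=
  \matrix_(i, j) f (enum_val i) (enum_val j).

Definition arc (d : nat) (y z : X d) : bool :=
  [exists i : 'I_d, (nat_of_ord (z i) == ((y i).+1 %% 3)%N)
                    && [forall j : 'I_d, (j != i) ==> (z j == y j)]].

Definition adjA (d : nat) : MatX d := mxX (fun y z => (arc y z)%:R).

Definition ones (d : nat) (y : X d) : nat := #|[set i | nat_of_ord (y i) == 1%N]|.
Definition twos (d : nat) (y : X d) : nat := #|[set i | nat_of_ord (y i) == 2%N]|.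

Definition Estar (d : nat) (s t : int) : MatX d :=
  mxX (fun y z => ((y == z) && ((ones y)%:Z == s) && ((twos y)%:Z == t))%:R).

Definition chg (d : nat) (a b : nat) (y z : X d) : bool :=
  [exists i : 'I_d, [&& nat_of_ord (y i) == a, nat_of_ord (z i) == b &
                     [forall j : 'I_d, (j != i) ==> (z j == y j)]]].

(* operators on V = C^X acting on column vectors: (M)_{z,y} = coefficient of zhat in M yhat *)
Definition opX (d : nat) (a b : nat) : MatX d := mxX (fun z y => (chg a b y z)%:R).
Definition R1 (d : nat) : MatX d := opX d 0 1.
Definition R2 (d : nat) : MatX d := opX d 1 2.
Definition L1 (d : nat) : MatX d := opX d 1 0.
Definition L2 (d : nat) : MatX d := opX d 2 1.

Inductive in_alg (K : fieldType) (n : nat) (S : 'M[K]_n -> Prop) : 'M[K]_n -> Prop :=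
  | alg_gen M : S M -> in_alg S M
  | alg_one : in_alg S 1%:M
  | alg_add M N : in_alg S M -> in_alg S N -> in_alg S (M + N)
  | alg_scale (c : K) M : in_alg S M -> in_alg S (c *: M)
  | alg_mul M N : in_alg S M -> in_alg S N -> in_alg S (M *m N).

Definition lie_br (K : fieldType) (n : nat) (M N : 'M[K]_n) : 'M[K]_n := M *m N - N *m M.

Inductive in_lie (K : fieldType) (n : nat) (S : 'M[K]_n -> Prop) : 'M[K]_n -> Prop :=
  | lie_gen M : S M -> in_lie S M
  | lie_zero : in_lie S 0
  | lie_add M N : in_lie S M -> in_lie S N -> in_lie S (M + N)
  | lie_scale (c : K) M : in_lie S M -> in_lie S (c *: M)
  | lie_brk M N : in_lie S M -> in_lie S N -> in_lie S (lie_br M N).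

Definition Tgens (d : nat) (M : MatX d) : Prop :=
  M = adjA d \/ M = (adjA d)^T \/ exists s t : int, M = Estar d s t.
Definition Talg (d : nat) : MatX d -> Prop := in_alg (@Tgens d).

Definition AEgens (d : nat) (M : MatX d) : Prop :=
  M = adjA d \/ exists s t : int, M = Estar d s t.

Definition LRgens (d : nat) (M : MatX d) : Prop :=
  M = L1 d \/ M = L2 d \/ M = R1 d \/ M = R2 d.

Definition Lie (d : nat) : MatX d -> Prop := in_lie (@LRgens d).

Definition sl3 (M : 'M[C]_3) : Prop := \tr M = 0.

Definition lie_iso_sl3 (n : nat) (L : 'M[C]_n -> Prop) : Prop :=
  exists f : 'M[C]_3 -> 'M[C]_n,
    [/\ (forall (a : C) (x y : 'M[C]_3), f (a *: x + y) = a *: f x + f y),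
        (forall x y, sl3 x -> sl3 y -> f x = f y -> x = y),
        (forall x, sl3 x -> L (f x)),
        (forall M, L M -> exists2 x, sl3 x & f x = M) &
        (forall x y, sl3 x -> sl3 y -> f (lie_br x y) = lie_br (f x) (f y))].

Definition submod (n : nat) (P : 'M[C]_n -> Prop) (W : {vspace 'cV[C]_n}) : Prop :=
  forall M v, P M -> v \in W -> M *m v \in W.

Definition irred (n : nat) (P : 'M[C]_n -> Prop) (W : {vspace 'cV[C]_n}) : Prop :=
  [/\ submod P W, W != 0%VS &
      forall U : {vspace 'cV[C]_n}, (U <= W)%VS -> submod P U -> U = 0%VS \/ U = W].

(* Identify V = C^X with (C^3)^{(x)d}.  Letting a 3x3 matrix act on one tensor
   factor at a time and summing over the factors gives a Lie algebra
   homomorphism gl_3 -> Mat_X, injective when d > 0.  It maps the matrix units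
   e01, e12, e10, e21 to L1, L2, R1, R2, the cyclic shift to A, and e11, e22 to
   the diagonal matrices counting the coordinates equal to 1 and 2.  So the Lie
   algebra generated by L1, L2, R1, R2 is the image of sl_3, and the algebra they
   generate contains the image of all of gl_3: in particular A, A^T, and every
   E*_[s,t], a product of polynomials in the two counting matrices.  Conversely,
   A and the E*_[s,t] give back e22, and brackets of e22 with the shift give back
   the root vectors.  A subspace is invariant under a set of operators iff it is
   invariant under its Lie or associative closure, whence the module statements. *)

From Pilot Require Import Defs.
From HB Require Import structures.
From mathcomp Require Import all_boot all_order all_algebra.
From mathcomp.real_closed Require Import complex.
From mathcomp Require Import Rstruct.
From mathcomp Require Import ring.
Set Implicit Arguments. Unset Strict Implicit. Unset Printing Implicit Defensive.
Import Order.TTheory GRing.Theory Num.Theory.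
Local Open Scope ring_scope.
(* ssralg's [in_alg] (the scalar embedding) would shadow the predicate of Defs. *)
Local Notation in_alg := Pilot.Defs.in_alg.

Section Generation.
Variables (K : fieldType) (n : nat).
Implicit Types (S T : 'M[K]_n -> Prop) (M N : 'M[K]_n).

Lemma in_alg0 S : in_alg S 0.
Proof. by rewrite -(scale0r 1%:M); apply/alg_scale/alg_one. Qed.

Lemma in_algB S M N : in_alg S M -> in_alg S N -> in_alg S (M - N).
Proof. by move=> SM SN; rewrite -scaleN1r; apply/alg_add/alg_scale. Qed.

Lemma in_alg_br S M N : in_alg S M -> in_alg S N -> in_alg S (lie_br M N).
Proof. by move=> SM SN; apply/in_algB; apply: alg_mul. Qed.

Lemma in_alg_sum S (I : Type) (r : seq I) (F : I -> 'M[K]_n) :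
  (forall i, in_alg S (F i)) -> in_alg S (\sum_(i <- r) F i).
Proof.
move=> SF; elim: r => [|i r IHr]; first by rewrite big_nil; apply: in_alg0.
by rewrite big_cons; apply: alg_add.
Qed.

Lemma in_alg_trans S T M :
  (forall N, S N -> in_alg T N) -> in_alg S M -> in_alg T M.
Proof.
move=> ST; elim=> {M} [M /ST //||M N _ ? _ ?|c M _ ?|M N _ ? _ ?].
- exact: alg_one.
- exact: alg_add.
- exact: alg_scale.
- exact: alg_mul.
Qed.

End Generation.

Section Submodules.
Variable n : nat.
Implicit Types (P Q : 'M[C]_n -> Prop) (W : {vspace 'cV[C]_n}).

Lemma submod_in_alg P W : submod (in_alg P) W <-> submod P W.
Proof.
split=> [PW M v PM|PW M v PM]; first by apply/PW/alg_gen.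
elim: PM v => {M} [M PM||M N _ IHM _ IHN|c M _ IHM|M N _ IHM _ IHN] v Wv.
- exact: PW.
- by rewrite mul1mx.
- by rewrite mulmxDl memvD ?IHM ?IHN.
- by rewrite -scalemxAl memvZ ?IHM.
- by rewrite -mulmxA IHM ?IHN.
Qed.

Lemma submod_in_lie P W : submod (in_lie P) W <-> submod P W.
Proof.
split=> [PW M v PM|PW M v PM]; first by apply/PW/lie_gen.
elim: PM v => {M} [M PM||M N _ IHM _ IHN|c M _ IHM|M N _ IHM _ IHN] v Wv.
- exact: PW.
- by rewrite mul0mx mem0v.
- by rewrite mulmxDl memvD ?IHM ?IHN.
- by rewrite -scalemxAl memvZ ?IHM.
- by rewrite mulmxBl -!mulmxA memvB ?IHM ?IHN ?IHM.
Qed.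

Lemma submod_ext P Q W : (forall M, P M <-> Q M) -> submod P W <-> submod Q W.
Proof. by move=> PQ; split=> PW M v /PQ; apply: PW. Qed.

Lemma irred_ext P Q W :
  (forall U, submod P U <-> submod Q U) -> irred P W <-> irred Q W.
Proof.
by move=> PQ; split=> -[/PQ PW W0 minW]; split=> // U UW /PQ; apply: minW.
Qed.

End Submodules.

Lemma lie_br_sum (K : fieldType) (n : nat) (I : finType) (A B : I -> 'M[K]_n) :
  (forall i j, i != j -> A i *m B j = B j *m A i) ->
  lie_br (\sum_i A i) (\sum_j B j) = \sum_i lie_br (A i) (B i).
Proof.
move=> commAB; rewrite /lie_br mulmx_suml mulmx_sumr -sumrB.
apply: eq_bigr => i _; rewrite mulmx_sumr mulmx_suml -sumrB (bigD1 i) //=.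
by rewrite big1 ?addr0 // => j ji; rewrite commAB 1?eq_sym ?subrr.
Qed.

Lemma lie_br_delta (K : fieldType) (n : nat) (p q r s : 'I_n) :
  lie_br (delta_mx p q) (delta_mx r s) =
  delta_mx p s *+ (q == r) - delta_mx r q *+ (s == p) :> 'M[K]_n.
Proof. by rewrite /lie_br !mul_delta_mx_cond. Qed.

Definition lie_closed (K : fieldType) (n : nat) (P : 'M[K]_n -> Prop) : Prop :=
  [/\ P 0, forall x y, P x -> P y -> P (x + y),
      forall c x, P x -> P (c *: x) & forall x y, P x -> P y -> P (lie_br x y)].

Section LieClosed.
Variables (K : fieldType) (n : nat) (P : 'M[K]_n.+1 -> Prop).
Hypothesis lie_closedP : lie_closed P.

Lemma lie_closed_sum (I : Type) (r : seq I) (F : I -> 'M[K]_n.+1) :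
  (forall i, P (F i)) -> P (\sum_(i <- r) F i).
Proof.
case: lie_closedP => P0 PD _ _.
by move=> PF; elim: r => [|i r IHr]; rewrite ?big_nil ?big_cons //; apply: PD.
Qed.

(* The diagonal part of a traceless [x] is [\sum_p x p p *: (e_pp - e_00)], and
   [e_pp - e_00 = lie_br e_p0 e_0p]. *)
Lemma lie_closed_traceless :
  (forall p q, p != q -> P (delta_mx p q)) -> forall x, \tr x = 0 -> P x.
Proof.
case: lie_closedP => P0 PD PZ Pbr Pdelta x trx0.
have diag_shift : \sum_p x p p *: delta_mx p p =
    \sum_p x p p *: (delta_mx p p - delta_mx 0 0) :> 'M[K]_n.+1.
  have tr_e00 : \sum_p x p p *: delta_mx 0 0 = 0 :> 'M[K]_n.+1.
    by rewrite -scaler_suml -/(\tr x) trx0 scale0r.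
  by under [RHS]eq_bigr do rewrite scalerBr; rewrite sumrB tr_e00 subr0.
rewrite [x]matrix_sum_delta.
under eq_bigr => p _ do rewrite (bigD1 p) //=.
rewrite big_split /= diag_shift; apply: PD; apply: lie_closed_sum => p.
  apply: PZ; have [->|p0] := eqVneq p 0; first by rewrite subrr.
  have <- : lie_br (delta_mx p 0) (delta_mx 0 p) =
             delta_mx p p - delta_mx 0 0 :> 'M[K]_n.+1.
    by rewrite lie_br_delta !eqxx.
  by apply: Pbr; apply: Pdelta; rewrite // eq_sym.
rewrite big_mkcond /=; apply: lie_closed_sum => q; case: ifP => [qp|_] //.
by apply/PZ/Pdelta; rewrite eq_sym qp.
Qed.

End LieClosed.

Lemma lie_closed_sl3 : lie_closed sl3.
Proof.
rewrite /sl3; split=> [|x y|c x|x y] /=; rewrite ?mxtrace0 ?mxtraceD ?mxtraceZ //.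
- by move=> -> ->; rewrite addr0.
- by move=> ->; rewrite mulr0.
- by move=> _ _; rewrite raddfN /= mxtrace_mulC subrr.
Qed.

Lemma sl3_delta (p q : 'I_3) : p != q -> sl3 (delta_mx p q).
Proof.
move=> pq; rewrite /sl3 /mxtrace big1 // => i _; rewrite mxE.
by case: eqP => // ->; rewrite (negbTE pq).
Qed.

Lemma ord3_ind (P : 'I_3 -> Prop) : P 0 -> P 1 -> P 2 -> forall p, P p.
Proof.
move=> P0 P1 P2 [[|[|[|//]]] lt_p3].
- by rewrite (_ : Ordinal lt_p3 = 0) //; apply: val_inj.
- by rewrite (_ : Ordinal lt_p3 = 1) //; apply: val_inj.
- by rewrite (_ : Ordinal lt_p3 = 2) //; apply: val_inj.
Qed.

Ltac mx3_ext :=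
  apply/matrixP; apply: ord3_ind; apply: ord3_ind;
  rewrite !mxE ?big_ord_recr ?big_ord0 /= ?mxE /=; ring.

Definition shift3 : 'M[C]_3 := \matrix_(p, q) (nat_of_ord q == (p.+1 %% 3)%N)%:R.

Local Notation e p q := (delta_mx p q : 'M[C]_3).

Lemma shift3E : shift3 = e 0 1 + e 1 2 + e 2 0.
Proof. mx3_ext. Qed.

Lemma lie_br_e22_shift3 : lie_br (e 2 2) shift3 = e 2 0 - e 1 2.
Proof. rewrite /lie_br; mx3_ext. Qed.

Lemma lie_br_e22_e20_e12 : lie_br (e 2 2) (e 2 0 - e 1 2) = e 2 0 + e 1 2.
Proof. rewrite /lie_br; mx3_ext. Qed.

Section LieClosedSl3.
Variable P : 'M[C]_3 -> Prop.
Hypothesis lie_closedP : lie_closed P.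

Lemma sl3_of_simple_roots :
  P (e 0 1) -> P (e 1 2) -> P (e 1 0) -> P (e 2 1) -> forall x, sl3 x -> P x.
Proof.
case: (lie_closedP) => _ _ _ Pbr P01 P12 P10 P21.
have P02 : P (e 0 2) by have := Pbr _ _ P01 P12; rewrite lie_br_delta /= subr0.
have P20 : P (e 2 0) by have := Pbr _ _ P21 P10; rewrite lie_br_delta /= subr0.
apply: lie_closed_traceless => // p q; elim/ord3_ind: p; elim/ord3_ind: q => //.
Qed.

Lemma sl3_of_shift3 : P shift3 -> P (e 2 2) -> forall x, sl3 x -> P x.
Proof.
case: (lie_closedP) => _ PD PZ Pbr Pshift P22.
have PB x y : P x -> P y -> P (x - y).
  by move=> Px Py; rewrite -scaleN1r; apply/PD/PZ.
have Pu : P (e 2 0 - e 1 2) by rewrite -lie_br_e22_shift3; apply: Pbr.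
have Pv : P (e 2 0 + e 1 2) by rewrite -lie_br_e22_e20_e12; apply: Pbr.
have P_half x : P (2 *: x) -> P x.
  by move/(PZ 2^-1); rewrite scalerA mulVf ?pnatr_eq0 // scale1r.
have P20 : P (e 2 0).
  apply: P_half; have -> : 2 *: e 2 0 = (e 2 0 - e 1 2) + (e 2 0 + e 1 2) by mx3_ext.
  exact: PD.
have P12 : P (e 1 2).
  apply: P_half; have -> : 2 *: e 1 2 = (e 2 0 + e 1 2) - (e 2 0 - e 1 2) by mx3_ext.
  exact: PB.
have P01 : P (e 0 1).
  have -> : e 0 1 = shift3 - e 2 0 - e 1 2 by rewrite shift3E !addrK.
  by apply: (PB) => //; apply: (PB).
have P10 : P (e 1 0) by have := Pbr _ _ P12 P20; rewrite lie_br_delta /= subr0.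
have P21 : P (e 2 1) by have := Pbr _ _ P20 P01; rewrite lie_br_delta /= subr0.
exact: sl3_of_simple_roots.
Qed.

End LieClosedSl3.

Section MatrixOfFunction.
Variable d : nat.
Implicit Types (f g : X d -> X d -> C).

Lemma mxXE f y z : mxX f (enum_rank y) (enum_rank z) = f y z.
Proof. by rewrite mxE !enum_rankK. Qed.

Lemma eq_mxX f g : (forall y z, f y z = g y z) -> mxX f = mxX g.
Proof. by move=> fg; apply/matrixP => i j; rewrite !mxE fg. Qed.

Lemma mxX_inj f g : mxX f = mxX g -> forall y z, f y z = g y z.
Proof. by move=> fg y z; rewrite -!mxXE fg. Qed.

Lemma mxX0 : @mxX d (fun _ _ => 0) = 0.
Proof. by apply/matrixP => i j; rewrite !mxE. Qed.

Lemma mxX1 : @mxX d (fun y z => (y == z)%:R) = 1%:M.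
Proof. by apply/matrixP => i j; rewrite !mxE (inj_eq enum_val_inj). Qed.

Lemma mxXD f g : mxX f + mxX g = mxX (fun y z => f y z + g y z).
Proof. by apply/matrixP => i j; rewrite !mxE. Qed.

Lemma mxXZ (c : C) f : c *: mxX f = mxX (fun y z => c * f y z).
Proof. by apply/matrixP => i j; rewrite !mxE. Qed.

Lemma mxX_sum (I : finType) (F : I -> X d -> X d -> C) :
  \sum_i mxX (F i) = mxX (fun y z => \sum_i F i y z).
Proof.
by apply/matrixP => i j; rewrite summxE !mxE; apply: eq_bigr => k _; rewrite mxE.
Qed.

Lemma mxXM f g : mxX f *m mxX g = mxX (fun y z => \sum_u f y u * g u z).
Proof.
apply/matrixP => i j; rewrite !mxE (reindex (@enum_val _ (mem (X d)))) /=.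
  by apply: eq_bigr => k _; rewrite !mxE.
by exists enum_rank => u _; rewrite ?enum_valK ?enum_rankK.
Qed.

Lemma trmx_mxX f : (mxX f)^T = mxX (fun y z => f z y).
Proof. by apply/matrixP => i j; rewrite !mxE. Qed.

End MatrixOfFunction.

Section CoordinateAction.
Variable d : nat.
Implicit Types (x y : 'M[C]_3) (i j : 'I_d) (z w : X d).

Definition agree_off i z w : bool := [forall j, (j != i) ==> (z j == w j)].

(* [coord_mx i x] is [x] acting on the [i]-th tensor factor of [C^X = (C^3)^{(x)d}]. *)
Definition coord_mx i x : MatX d :=
  mxX (fun z w => (agree_off i z w)%:R * x (z i) (w i)).

Definition gl3_rep x : MatX d := \sum_i coord_mx i x.

Definition upd z i (c : 'I_3) : X d := [ffun j => if j == i then c else z j].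

Lemma upd_same z i c : upd z i c i = c.
Proof. by rewrite ffunE eqxx. Qed.

Lemma upd_other z i c j : j != i -> upd z i c j = z j.
Proof. by rewrite ffunE => /negbTE ->. Qed.

Lemma upd_id z i : upd z i (z i) = z.
Proof. by apply/ffunP => j; rewrite ffunE; case: eqP => // ->. Qed.

Lemma agree_offP i z w : reflect (w = upd z i (w i)) (agree_off i z w).
Proof.
apply: (iffP forallP) => [agr|-> j]; last first.
  by apply/implyP => ji; rewrite upd_other.
apply/ffunP => k; rewrite ffunE; case: eqVneq => [->//|ki].
by apply/esym/eqP; apply: (implyP (agr k)).
Qed.

Lemma agree_off_refl i z : agree_off i z z.
Proof. by apply/forallP => j; apply/implyP. Qed.

Lemma agree_off_upd i z c w : agree_off i (upd z i c) w = agree_off i z w.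
Proof.
apply: eq_forallb => j.
by case: eqVneq => //= ji; rewrite upd_other.
Qed.

Lemma sum_agree_off i z (G : X d -> C) :
  \sum_w (agree_off i z w)%:R * G w = \sum_c G (upd z i c).
Proof.
rewrite (eq_bigr (fun w => \sum_c (w == upd z i c)%:R * G w)); last first.
  move=> w _; rewrite -mulr_suml; congr (_ * _).
  have [agr|nagr] := boolP (agree_off i z w).
    rewrite (bigD1 (w i)) //= {1}(agree_offP _ _ _ agr) eqxx big1 ?addr0 // => c wic.
    by case: eqP => // wE; case/negP: wic; rewrite wE upd_same.
  rewrite big1 // => c _; case: eqP => // wE; case/negP: nagr.
  by rewrite wE; apply/agree_offP; rewrite upd_same.
rewrite exchange_big; apply: eq_bigr => c _.
by rewrite (bigD1 (upd z i c)) //= eqxx mul1r big1 ?addr0 // => w /negbTE->; rewrite mul0r.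
Qed.

Lemma agree_off_upd_other i j z c w : i != j ->
  agree_off j (upd z i c) w =
  (c == w i) && [forall k, ((k != i) && (k != j)) ==> (z k == w k)].
Proof.
move=> ij; apply/forallP/andP => [agr|[/eqP-> /forallP agr] k].
  split; first by have /implyP/(_ ij) := agr i; rewrite upd_same.
  apply/forallP => k; apply/implyP => /andP[ki kj].
  by have /implyP/(_ kj) := agr k; rewrite upd_other.
apply/implyP => kj; have [->|ki] := eqVneq k i; first by rewrite upd_same.
by rewrite upd_other //; have /implyP := agr k; rewrite ki kj; apply.
Qed.

Lemma coord_mxM i x y : coord_mx i x *m coord_mx i y = coord_mx i (x *m y).
Proof.
rewrite mxXM; apply: eq_mxX => z w.
under eq_bigr do rewrite -mulrA.
rewrite sum_agree_off mxE mulr_sumr; apply: eq_bigr => c _.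
by rewrite agree_off_upd !upd_same mulrCA.
Qed.

Lemma coord_mxM_other i j x y : i != j ->
  coord_mx i x *m coord_mx j y =
  mxX (fun z w => [forall k, ((k != i) && (k != j)) ==> (z k == w k)]%:R
                  * x (z i) (w i) * y (z j) (w j)).
Proof.
move=> ij; rewrite mxXM; apply: eq_mxX => z w.
under eq_bigr do rewrite -mulrA.
rewrite sum_agree_off (bigD1 (w i)) //= big1 ?addr0 => [|c /negbTE wic].
  by rewrite agree_off_upd_other // eqxx upd_same upd_other 1?eq_sym // mulrCA mulrA.
by rewrite agree_off_upd_other // wic mul0r !mulr0.
Qed.

Lemma coord_mx_comm i j x y : i != j ->
  coord_mx i x *m coord_mx j y = coord_mx j y *m coord_mx i x.
Proof.
move=> ij; rewrite !coord_mxM_other // 1?eq_sym //; apply: eq_mxX => z w.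
rewrite mulrAC; do 2![congr (_ * _)]; congr (nat_of_bool _)%:R.
by apply: eq_forallb => k; rewrite andbC.
Qed.

Lemma coord_mx_is_linear i : linear (coord_mx i).
Proof.
move=> a x y; rewrite mxXZ mxXD; apply: eq_mxX => z w.
by rewrite !mxE mulrDr mulrCA.
Qed.

HB.instance Definition _ i :=
  GRing.isLinear.Build C 'M[C]_3 (MatX d) *:%R (coord_mx i) (coord_mx_is_linear i).

Lemma gl3_rep_is_linear : linear gl3_rep.
Proof.
move=> a x y; rewrite /gl3_rep scaler_sumr -big_split.
by apply: eq_bigr => i _; rewrite linearP.
Qed.

HB.instance Definition _ :=
  GRing.isLinear.Build C 'M[C]_3 (MatX d) *:%R gl3_rep gl3_rep_is_linear.

End CoordinateAction.

Section Gl3Rep.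
Variable d : nat.
Implicit Types (x y : 'M[C]_3) (z w : X d).
Local Notation rep := (@gl3_rep d).

Lemma gl3_rep_br x y : rep (lie_br x y) = lie_br (rep x) (rep y).
Proof.
rewrite /gl3_rep lie_br_sum; last by move=> i j; apply: coord_mx_comm.
by apply: eq_bigr => i _; rewrite /lie_br linearB !coord_mxM.
Qed.

Lemma gl3_repE x :
  rep x = mxX (fun z w => \sum_i (agree_off i z w)%:R * x (z i) (w i)).
Proof. exact: mxX_sum. Qed.

Lemma gl3_rep_offdiag (Q : rel 'I_3) x :
  irreflexive Q -> (forall p q, x p q = (Q p q)%:R) ->
  rep x = mxX (fun z w => [exists i, Q (z i) (w i) && agree_off i z w]%:R).
Proof.
move=> Qirr xE; rewrite gl3_repE; apply: eq_mxX => z w.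
under eq_bigr do rewrite xE -natrM mulnb andbC.
case: existsP => [[i /andP[Qi agr]]|noQ].
  rewrite (bigD1 i) //= Qi agr big1 ?addr0 // => j ji.
  by rewrite (agree_offP _ _ _ agr) upd_other // Qirr.
rewrite big1 // => i _; have [QA|//] := boolP (_ && _).
by case: noQ; exists i.
Qed.

Definition diagX (g : X d -> C) : MatX d := mxX (fun z w => (z == w)%:R * g z).

Lemma gl3_rep_delta p :
  rep (delta_mx p p) = diagX (fun z => #|[set i | nat_of_ord (z i) == p]|%:R).
Proof.
rewrite gl3_repE; apply: eq_mxX => z w; under eq_bigr do rewrite mxE.
have [<-|zw] := eqVneq z w.
  rewrite mul1r cardsE -sum1_card natr_sum [RHS]big_mkcond /=.
  apply: eq_bigr => i _; rewrite agree_off_refl andbb mul1r unfold_in.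
  by rewrite -[eqn _ _]/(z i == p); case: (z i == p).
rewrite mul0r big1 // => i _.
case agr: (agree_off i z w); rewrite ?mul0r // mul1r.
have [zip|_] := eqVneq (z i) p; have [wip|_] //= := eqVneq (w i) p.
by case/eqP: zw; rewrite (agree_offP _ _ _ agr) wip -zip upd_id.
Qed.

Lemma gl3_rep1 : rep 1%:M = d%:R *: 1%:M.
Proof.
rewrite gl3_repE -mxX1 mxXZ; apply: eq_mxX => z w.
rewrite (eq_bigr (fun _ => (z == w)%:R)) ?sumr_const ?card_ord ?mulr_natl //.
move=> i _; rewrite mxE -natrM mulnb; congr (_%:R); congr (nat_of_bool _).
apply/andP/eqP => [[agr /eqP zwi]|<-]; last by rewrite agree_off_refl.
by rewrite (agree_offP _ _ _ agr) -zwi upd_id.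
Qed.

Lemma gl3_rep_inj : (0 < d)%N -> injective rep.
Proof.
move=> d_gt0; apply: raddf_inj => x /=; rewrite gl3_repE -mxX0 => /mxX_inj rep_x0.
apply/matrixP => p q; rewrite mxE; pose c : X d := [ffun=> p].
have [<-|pq] := eqVneq p q.
  have := rep_x0 c c; rewrite (eq_bigr (fun=> x p p)) => [|i _]; last first.
    by rewrite agree_off_refl !ffunE mul1r.
  by rewrite sumr_const card_ord => /eqP; rewrite mulrn_eq0 eqn0Ngt d_gt0 => /eqP.
pose i0 := Ordinal d_gt0; have := rep_x0 c (upd c i0 q).
have agr : agree_off i0 c (upd c i0 q) by apply/agree_offP; rewrite upd_same.
rewrite (bigD1 i0) //= agr upd_same ffunE mul1r big1 ?addr0 // => i i_i0.
case: (boolP (agree_off i _ _)) => [/agree_offP/(congr1 (fun w => w i0))|_].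
  by rewrite upd_same upd_other 1?eq_sym // ffunE => qp; case/eqP: pq.
by rewrite mul0r.
Qed.

Lemma agree_offC i (z w : X d) : agree_off i z w = agree_off i w z.
Proof. by apply: eq_forallb => j; rewrite [z j == _]eq_sym. Qed.

Lemma gl3_rep_tr x : rep x^T = (rep x)^T.
Proof.
rewrite !gl3_repE trmx_mxX; apply: eq_mxX => z w.
by apply: eq_bigr => i _; rewrite mxE agree_offC.
Qed.

Lemma opX_rep (a b : 'I_3) : a != b -> opX d a b = rep (e b a).
Proof.
move=> ab; rewrite (@gl3_rep_offdiag (fun p q => (p == b) && (q == a))).
- apply: eq_mxX => z w; congr (nat_of_bool _)%:R; apply: eq_existsb => i.
  by rewrite andbA (andbC (w i == a)).
- by move=> p /=; case: eqP => // ->; rewrite eq_sym (negbTE ab).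
- by move=> p q; rewrite mxE.
Qed.

Lemma L1_rep : L1 d = rep (e 0 1). Proof. exact: (@opX_rep 1 0). Qed.
Lemma L2_rep : L2 d = rep (e 1 2). Proof. exact: (@opX_rep 2 1). Qed.
Lemma R1_rep : R1 d = rep (e 1 0). Proof. exact: (@opX_rep 0 1). Qed.
Lemma R2_rep : R2 d = rep (e 2 1). Proof. exact: (@opX_rep 1 2). Qed.

Lemma adjA_rep : adjA d = rep shift3.
Proof.
rewrite (@gl3_rep_offdiag (fun p q => nat_of_ord q == (p.+1 %% 3)%N)).
- apply: eq_mxX => z w; congr (nat_of_bool _)%:R; apply: eq_existsb => i.
  by rewrite agree_offC.
- by apply: ord3_ind.
- by move=> p q; rewrite mxE.
Qed.

Lemma ones_rep : rep (e 1 1) = diagX (fun z : X d => (ones z)%:R).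
Proof. exact: gl3_rep_delta. Qed.

Lemma twos_rep : rep (e 2 2) = diagX (fun z : X d => (twos z)%:R).
Proof. exact: gl3_rep_delta. Qed.

End Gl3Rep.

Section DiagonalOperators.
Variable d : nat.
Implicit Types (g h : X d -> C) (S : MatX d -> Prop).

Lemma diagXM g h : diagX g *m diagX h = diagX (fun z => g z * h z).
Proof.
rewrite mxXM; apply: eq_mxX => z w; rewrite (bigD1 z) //= eqxx big1 ?addr0.
  by rewrite mul1r mulrCA.
by move=> u /negbTE zu; rewrite eq_sym zu !mul0r.
Qed.

Lemma in_alg_diagX_poly S g (p : {poly C}) :
  in_alg S (diagX g) -> in_alg S (diagX (fun z => p.[g z])).
Proof.
move=> Sg; elim/poly_ind: p => [|p c IHp].
  have -> : diagX (fun z => 0.[g z]) = 0.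
    by rewrite -(mxX0 d); apply: eq_mxX => z w; rewrite horner0 mulr0.
  exact: in_alg0.
have -> : diagX (fun z => (p * 'X + c%:P).[g z]) =
          diagX (fun z => p.[g z]) *m diagX g + c *: 1%:M.
  rewrite diagXM -mxX1 mxXZ mxXD; apply: eq_mxX => z w.
  by rewrite hornerMXaddC mulrDr; case: eqP => _; rewrite ?mul0r ?mul1r ?mulr0 ?mulr1.
by apply: alg_add; [apply: alg_mul|apply/alg_scale/alg_one].
Qed.

Lemma indicator_poly (m : nat) (s : int) :
  exists p : {poly C}, forall k, (k <= m)%N -> p.[k%:R] = (k%:Z == s)%:R.
Proof.
pose r := [seq j <- iota 0 m.+1 | j%:Z != s].
pose c := \prod_(j <- r) (s%:~R - j%:R : C).
exists (c^-1 *: \prod_(j <- r) ('X - j%:R%:P)) => k le_km.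
rewrite hornerZ horner_prod; under eq_bigr do rewrite hornerXsubC.
have [ks|ks] := eqVneq k%:Z s.
  rewrite /c -ks -pmulrn mulVf // prodf_seq_neq0; apply/allP => j.
  by rewrite /r mem_filter -ks => /andP[jk _]; rewrite subr_eq0 eqr_nat -eqz_nat eq_sym.
have kr : k \in r by rewrite mem_filter ks mem_iota.
by rewrite (big_rem _ kr) /= subrr mul0r mulr0.
Qed.

Lemma ones_le (z : X d) : (ones z <= d)%N.
Proof. by rewrite (leq_trans (max_card _)) ?card_ord. Qed.

Lemma twos_le (z : X d) : (twos z <= d)%N.
Proof. by rewrite (leq_trans (max_card _)) ?card_ord. Qed.

(* [E*_[s,t]] is a product of interpolation polynomials in the counting matrices,
   whose eigenvalues lie in [0, d]. *)
Lemma Estar_in_alg S s t :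
  in_alg S (diagX (fun z => (ones z)%:R)) -> in_alg S (diagX (fun z => (twos z)%:R)) ->
  in_alg S (Estar d s t).
Proof.
have [p p_ind] := indicator_poly d s; have [q q_ind] := indicator_poly d t.
move=> /(in_alg_diagX_poly p) Sp /(in_alg_diagX_poly q) Sq.
suff -> : Estar d s t = diagX (fun z => p.[(ones z)%:R]) *m diagX (fun z => q.[(twos z)%:R]).
  exact: alg_mul.
rewrite diagXM; apply: eq_mxX => z w.
by rewrite p_ind ?ones_le // q_ind ?twos_le // -!natrM !mulnb andbA.
Qed.

Lemma sum_Estar (f : nat -> nat -> C) :
  \sum_(s < d.+1) \sum_(t < d.+1) f s t *: Estar d s t =
  diagX (fun z => f (ones z) (twos z)).
Proof.
under eq_bigr do under eq_bigr do rewrite mxXZ.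
under eq_bigr do rewrite mxX_sum.
rewrite mxX_sum; apply: eq_mxX => z w.
rewrite (bigD1 (Ordinal (ones_le z : ones z < d.+1)%N)) //= [X in _ + X]big1 ?addr0.
  rewrite (bigD1 (Ordinal (twos_le z : twos z < d.+1)%N)) //= big1 ?addr0.
    by rewrite !eqxx !andbT mulrC.
  move=> t zt; rewrite !eqz_nat (_ : (twos z == t) = false) ?andbF ?mulr0 //.
  by apply: contraNF zt => /eqP zt; apply/eqP/val_inj.
move=> s zs; rewrite big1 // => t _.
rewrite eqz_nat (_ : (ones z == s) = false) ?andbF ?mulr0 //.
by apply: contraNF zs => /eqP zs; apply/eqP/val_inj.
Qed.

End DiagonalOperators.

Section TerwilligerAlgebra.
Variable d : nat.
Local Notation rep := (@gl3_rep d).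
Local Notation LR := (@LRgens d).
Local Notation AE := (@AEgens d).
Implicit Types (S : MatX d -> Prop) (M : MatX d).

Lemma lie_closed_rep_alg S : lie_closed (fun x => in_alg S (rep x)).
Proof.
split=> [|x y|c x|x y] /=.
- by rewrite linear0; apply: in_alg0.
- by rewrite linearD; apply: alg_add.
- by rewrite linearZ; apply: alg_scale.
- by rewrite gl3_rep_br; apply: in_alg_br.
Qed.

Lemma lie_closed_rep_lie S : lie_closed (fun x => in_lie S (rep x)).
Proof.
split=> [|x y|c x|x y] /=.
- by rewrite linear0; apply: lie_zero.
- by rewrite linearD; apply: lie_add.
- by rewrite linearZ; apply: lie_scale.
- by rewrite gl3_rep_br; apply: lie_brk.
Qed.

Lemma rep_in_alg_of_sl3 S :
  (forall x, sl3 x -> in_alg S (rep x)) -> forall x, in_alg S (rep x).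
Proof.
move=> Ssl3 x; pose c := \tr x / 3.
have -> : x = (x - c *: 1%:M) + c *: 1%:M by rewrite subrK.
rewrite linearD; apply: alg_add.
  apply: Ssl3; rewrite /sl3 mxtraceD raddfN /= mxtraceZ mxtrace1 divfK ?subrr //.
  by rewrite pnatr_eq0.
by rewrite linearZ /= gl3_rep1; do 2!apply: alg_scale; apply: alg_one.
Qed.

Lemma rep_in_alg_LR x : in_alg LR (rep x).
Proof.
apply: rep_in_alg_of_sl3 => {}x.
apply: (sl3_of_simple_roots (lie_closed_rep_alg LR)); apply: alg_gen.
- by left; rewrite L1_rep.
- by right; left; rewrite L2_rep.
- by right; right; left; rewrite R1_rep.
- by right; right; right; rewrite R2_rep.
Qed.

Lemma rep_in_alg_AE x : in_alg AE (rep x).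
Proof.
apply: rep_in_alg_of_sl3 => {}x; apply: (sl3_of_shift3 (lie_closed_rep_alg AE)).
  by apply: alg_gen; left; rewrite adjA_rep.
rewrite twos_rep -(sum_Estar d (fun _ t => t%:R)).
apply: in_alg_sum => s; apply: in_alg_sum => t; apply/alg_scale/alg_gen.
by right; exists s, t.
Qed.

Lemma Talg_in_alg S : (forall x, in_alg S (rep x)) -> forall M, Talg M -> in_alg S M.
Proof.
move=> Srep M; apply: in_alg_trans => N [->|[->|[s [t ->]]]].
- by rewrite adjA_rep.
- by rewrite adjA_rep -gl3_rep_tr.
- by apply: Estar_in_alg; rewrite -?ones_rep -?twos_rep.
Qed.

Lemma LR_in_alg S : (forall x, in_alg S (rep x)) -> forall M, in_alg LR M -> in_alg S M.
Proof.
move=> Srep M; apply: in_alg_trans => N [->|[->|[->|->]]].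
- by rewrite L1_rep.
- by rewrite L2_rep.
- by rewrite R1_rep.
- by rewrite R2_rep.
Qed.

Lemma AE_in_Talg M : in_alg AE M -> Talg M.
Proof.
apply: in_alg_trans => N [->|[s [t ->]]]; apply: alg_gen; first by left.
by right; right; exists s, t.
Qed.

Lemma Talg_AE M : Talg M <-> in_alg AE M.
Proof. by split=> [/(Talg_in_alg rep_in_alg_AE)|/AE_in_Talg]. Qed.

Lemma Talg_LR M : Talg M <-> in_alg LR M.
Proof.
by split=> [/(Talg_in_alg rep_in_alg_LR)|/(LR_in_alg rep_in_alg_AE)/AE_in_Talg].
Qed.

Lemma Lie_rep_sl3 x : sl3 x -> Lie (rep x).
Proof.
apply: (sl3_of_simple_roots (lie_closed_rep_lie LR)); apply: lie_gen.
- by left; rewrite L1_rep.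
- by right; left; rewrite L2_rep.
- by right; right; left; rewrite R1_rep.
- by right; right; right; rewrite R2_rep.
Qed.

Lemma Lie_rep_image M : Lie M -> exists2 x, sl3 x & rep x = M.
Proof.
case: lie_closed_sl3 => sl3_0 sl3D sl3Z sl3_br.
elim=> {M} [M [|[|[|]]] ->||M N _ [x sx <-] _ [y sy <-]|c M _ [x sx <-]
           |M N _ [x sx <-] _ [y sy <-]].
- by exists (e 0 1); [apply: sl3_delta | rewrite L1_rep].
- by exists (e 1 2); [apply: sl3_delta | rewrite L2_rep].
- by exists (e 1 0); [apply: sl3_delta | rewrite R1_rep].
- by exists (e 2 1); [apply: sl3_delta | rewrite R2_rep].
- by exists 0; [apply: sl3_0 | rewrite linear0].
- by exists (x + y); [apply: sl3D | rewrite linearD].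
- by exists (c *: x); [apply: sl3Z | rewrite linearZ].
- by exists (lie_br x y); [apply: sl3_br | rewrite gl3_rep_br].
Qed.

Lemma submod_Lie_Talg (W : {vspace VX d}) : submod (@Lie d) W <-> submod (@Talg d) W.
Proof.
rewrite /Lie submod_in_lie -submod_in_alg.
by apply: submod_ext => M; apply: iff_sym; apply: Talg_LR.
Qed.

End TerwilligerAlgebra.

Theorem proposition3p2 (d : nat) (hd : (0 < d)%N) :
  [/\ (forall M : MatX d, Talg M <-> in_alg (@AEgens d) M),
      (forall M : MatX d, Talg M <-> in_alg (@LRgens d) M) &
      [/\ lie_iso_sl3 (@Lie d),
          (forall W : {vspace VX d}, submod (@Lie d) W <-> submod (@Talg d) W) &
          (forall W : {vspace VX d}, irred (@Lie d) W <-> irred (@Talg d) W)]].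
Proof.
split; [exact: Talg_AE | exact: Talg_LR | split].
- exists (@gl3_rep d); split.
  + exact: linearP.
  + by move=> x y _ _; apply: gl3_rep_inj.
  + exact: Lie_rep_sl3.
  + exact: Lie_rep_image.
  + by move=> x y _ _; apply: gl3_rep_br.
- exact: submod_Lie_Talg.
- by move=> W; apply: irred_ext => U; apply: submod_Lie_Talg.
Qed.
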